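(* Under the standing assumptions below, the map $\theta\mapsto-\bar g(\theta)$ is a gradient splitting of the quadratic $$f(\theta)=(1-\gamma)\|V_\theta-V_{\theta^*}\|_D^2+\gamma\|V_\theta-V_{\theta^*}\|_{\rm Dir}^2 .$$ Explicitly, $-\bar g(\theta)=B(\theta-\theta^* )$ with $B=E[\phi(\phi-\gamma\phi')^T]$, $f(\theta)=(\theta-\theta^* )^TB(\theta-\theta^* )$, and $B+B^T=2A$ where $A$ is the symmetric matrix with $f(\theta)=(\theta-\theta^* )^TA(\theta-\theta^* )$; here $\phi=\phi(s)$, $\phi'=\phi(s')$ with $s\sim\pi$ and $s'\sim P(s,\cdot)$.
   Context: Setting: finite state space $\mathcal S=[n]$, a fixed policy inducing a transition matrix $P\in\mathbb{R}^{n\times n}$ which is irreducible and aperiodic, with unique stationary distribution $\pi=(\pi_1,\dots,\pi_n)$ (row vector); $D=\mathrm{diag}(\pi_1,\dots,\pi_n)$. Rewards $r(s,a,s')$ are deterministic and bounded, $r(s,s')=\sum_a\mu(s,a)r(s,a,s')$ where $\mu$ is the policy; $\gamma\in(0,1)$ is the discount factor. Features: $\Phi=[\phi_1,\dots,\phi_K]\in\mathbb{R}^{n\times K}$ has full column rank, $\phi(s)=(\phi_1(s),\dots,\phi_K(s))^T$ with $\|\phi(s)\|_2\le 1$, and $V_\theta=\Phi\theta$ (so $V_\theta(s)=\theta^T\phi(s)$). Norms: $\|V\|_D^2=\sum_s\pi_sV(s)^2$; Dirichlet seminorm $\|V\|_{\rm Dir}^2=\frac12\sum_{s,s'}\pi_sP(s,s')(V(s')-V(s))^2$.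 Mean TD(0) direction: $\bar g(\theta)=\sum_{s,s'}\pi_sP(s,s')\big(r(s,s')+\gamma\phi(s')^T\theta-\phi(s)^T\theta\big)\phi(s)$, and $\theta^*$ is the unique vector with $\bar g(\theta^* )=0$. Gradient splitting: for symmetric PSD $A$ and $f(\theta)=(\theta-a)^TA(\theta-a)$, a linear map $h(\theta)=B(\theta-a)$ is a gradient splitting of $f$ if $B+B^T=2A$. *)

From mathcomp Require Import all_boot all_order all_algebra.
Set Implicit Arguments. Unset Strict Implicit. Unset Printing Implicit Defensive.
Import Order.TTheory GRing.Theory Num.Theory.
Local Open Scope ring_scope.

Section TD.
Variables (R : realFieldType) (n K : nat).

Definition stochastic (P : 'M[R]_n) : Prop :=
  (forall i j, 0 <= P i j) /\ (forall i, \sum_j P i j = 1).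

Definition irreducible (P : 'M[R]_n) : Prop :=
  forall i j, exists k : nat, 0 < (P ^+ k) i j.

(* aperiodic: every state has period 1, i.e. the gcd of
   {k >= 1 : P^k(i,i) > 0} is 1 (any common divisor of that set is 1) *)
Definition aperiodic (P : 'M[R]_n) : Prop :=
  forall i (d : nat), (forall k : nat, (0 < k)%N -> 0 < (P ^+ k) i i -> (d %| k)%N)
    -> d = 1%N.

Definition stationary_dist (P : 'M[R]_n) (pi : 'rV[R]_n) : Prop :=
  (forall i, 0 <= pi 0 i) /\ \sum_i pi 0 i = 1 /\ pi *m P = pi.

Definition phi (Phi : 'M[R]_(n, K)) (s : 'I_n) : 'cV[R]_K := (row s Phi)^T.

Definition sc (M : 'M[R]_1) : R := M 0 0.

Definition quad (A : 'M[R]_K) (x : 'cV[R]_K) : R := sc (x^T *m A *m x).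

Definition rbar (m : nat) (mu : 'I_n -> 'I_m -> R) (r : 'I_n -> 'I_m -> 'I_n -> R)
  (s s' : 'I_n) : R := \sum_a mu s a * r s a s'.

Definition normD2 (pi : 'rV[R]_n) (V : 'cV[R]_n) : R :=
  \sum_s pi 0 s * V s 0 ^+ 2.

Definition dir2 (P : 'M[R]_n) (pi : 'rV[R]_n) (V : 'cV[R]_n) : R :=
  2^-1 * \sum_s \sum_s' pi 0 s * P s s' * (V s' 0 - V s 0) ^+ 2.

Definition gbar (P : 'M[R]_n) (pi : 'rV[R]_n) (rr : 'I_n -> 'I_n -> R)
  (gamma : R) (Phi : 'M[R]_(n, K)) (theta : 'cV[R]_K) : 'cV[R]_K :=
  \sum_s \sum_s' (pi 0 s * P s s' *
     (rr s s' + gamma * sc ((phi Phi s')^T *m theta) - sc ((phi Phi s)^T *m theta)))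
     *: phi Phi s.

Definition Bmat (P : 'M[R]_n) (pi : 'rV[R]_n) (gamma : R) (Phi : 'M[R]_(n, K))
  : 'M[R]_K :=
  \sum_s \sum_s' (pi 0 s * P s s') *:
     (phi Phi s *m (phi Phi s - gamma *: phi Phi s')^T).

Definition fobj (P : 'M[R]_n) (pi : 'rV[R]_n) (gamma : R) (Phi : 'M[R]_(n, K))
  (thetastar theta : 'cV[R]_K) : R :=
  let V := Phi *m theta - Phi *m thetastar in
  (1 - gamma) * normD2 pi V + gamma * dir2 P pi V.

End TD.

Definition gradient_splitting (R : realFieldType) (K : nat)
  (f : 'cV[R]_K -> R) (h : 'cV[R]_K -> 'cV[R]_K) : Prop :=
  exists (A B : 'M[R]_K) (a : 'cV[R]_K),
    A^T = A /\ (forall x, 0 <= quad A x) /\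
    (forall theta, f theta = quad A (theta - a)) /\
    (forall theta, h theta = B *m (theta - a)) /\
    B + B^T = 2%:R *: A.

From mathcomp Require Import all_boot all_order all_algebra ring.
Import Order.TTheory GRing.Theory Num.Theory.
Local Open Scope ring_scope.

(* The mean TD(0) direction is affine in theta, and its linear part is
   -B with B = E[phi (phi - gamma phi')^T]; since gbar(theta* ) = 0 this gives
   -gbar(theta) = B (theta - theta* ).  Writing x = Phi d for d = theta - theta*,
   the quadratic form d^T B d equals E[(x(s) - gamma x(s')) x(s)], and
   stationarity of pi (s and s' have the same law) turns this into
   (1 - gamma) E[x(s)^2] + (gamma/2) E[(x(s') - x(s))^2] = f(theta). *)

Section QuadraticForms.
Variables (R : realFieldType) (K : nat).
Implicit Types (M N : 'M[R]_K) (u v : 'cV[R]_K).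

Lemma sc_trmx (M : 'M[R]_1) : sc M^T = sc M.
Proof. by rewrite /sc mxE. Qed.

Lemma scD (M N : 'M[R]_1) : sc (M + N) = sc M + sc N.
Proof. by rewrite /sc mxE. Qed.

Lemma scN (M : 'M[R]_1) : sc (- M) = - sc M.
Proof. by rewrite /sc mxE. Qed.

Lemma scZ c (M : 'M[R]_1) : sc (c *: M) = c * sc M.
Proof. by rewrite /sc mxE. Qed.

Lemma mul_col_scalar u (M : 'M[R]_1) : u *m M = sc M *: u.
Proof. by apply/matrixP => i j; rewrite !mxE big_ord1 (ord1 j) mulrC. Qed.

Lemma quad_trmx M u : quad M^T u = quad M u.
Proof. by rewrite /quad -[LHS]sc_trmx !trmx_mul !trmxK mulmxA. Qed.

Lemma quadD M N u : quad (M + N) u = quad M u + quad N u.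
Proof. by rewrite /quad mulmxDr mulmxDl scD. Qed.

Lemma quadZ c M u : quad (c *: M) u = c * quad M u.
Proof. by rewrite /quad -scalemxAr -scalemxAl scZ. Qed.

Lemma quad_addv M u v :
  quad M (u + v) = quad M u + quad M v + sc (u^T *m M *m v) + sc (v^T *m M *m u).
Proof. by rewrite /quad !linearD /= !mulmxDl !scD; ring. Qed.

Lemma quad_sym_part M u : quad (2^-1 *: (M + M^T)) u = quad M u.
Proof. by rewrite quadZ quadD quad_trmx; field; rewrite ?pnatr_eq0. Qed.

(* A symmetric matrix whose quadratic form vanishes identically is zero:
   by polarization its bilinear form vanishes, in particular on basis vectors. *)
Lemma sym_quad0_eq0 M : M^T = M -> (forall u, quad M u = 0) -> M = 0.
Proof.
move=> Msym M0.
have bilin0 u v : sc (u^T *m M *m v) = 0.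
  have swap : sc (v^T *m M *m u) = sc (u^T *m M *m v).
    by rewrite -[LHS]sc_trmx !trmx_mul !trmxK Msym mulmxA.
  have := quad_addv M u v; rewrite !M0 swap !add0r => /esym/eqP.
  by rewrite -mulr2n -mulr_natr mulf_eq0 pnatr_eq0 orbF => /eqP.
apply/matrixP => i j; rewrite mxE.
by have := bilin0 (delta_mx i 0) (delta_mx j 0); rewrite trmx_delta -rowE -colE /sc !mxE.
Qed.

Lemma gradient_splitting_of (B : 'M[R]_K) (a : 'cV[R]_K)
    (f : 'cV[R]_K -> R) (h : 'cV[R]_K -> 'cV[R]_K) :
  (forall theta, f theta = quad B (theta - a)) ->
  (forall theta, 0 <= f theta) ->
  (forall theta, h theta = B *m (theta - a)) ->
  gradient_splitting f h.
Proof.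
move=> fB f_ge0 hB; exists (2^-1 *: (B + B^T)), B, a.
split; first by rewrite linearZ /= linearD /= trmxK addrC.
split; first by move=> u; rewrite quad_sym_part -(addrK a u) -fB.
split; first by move=> theta; rewrite quad_sym_part fB.
split=> //.
by rewrite scalerA divff ?scale1r // pnatr_eq0.
Qed.

Lemma sym_part_unique (A B : 'M[R]_K) :
  A^T = A -> (forall u, quad A u = quad B u) -> B + B^T = 2%:R *: A.
Proof.
move=> Asym AB; apply/eqP; rewrite -subr_eq0; apply/eqP/sym_quad0_eq0.
  by rewrite linearB /= linearZ /= Asym linearD /= trmxK [B^T + B]addrC.
by move=> u; rewrite quadD -scaleNr quadZ quadD quad_trmx AB; ring.
Qed.

End QuadraticForms.

Section TDQuadratic.
Variables (R : realFieldType) (n K : nat).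
Variables (P : 'M[R]_n) (pi : 'rV[R]_n) (gamma : R) (Phi : 'M[R]_(n, K)).

Definition value (d : 'cV[R]_K) (s : 'I_n) : R := (Phi *m d) s 0.

Lemma phi_inner s d : sc ((phi Phi s)^T *m d) = value d s.
Proof. by rewrite /phi trmxK -row_mul /sc mxE. Qed.

Lemma Bmat_mulmx d : Bmat P pi gamma Phi *m d =
  \sum_s \sum_s' (pi 0 s * P s s' * (value d s - gamma * value d s')) *: phi Phi s.
Proof.
rewrite /Bmat mulmx_suml; apply: eq_bigr => s _.
rewrite mulmx_suml; apply: eq_bigr => s' _.
rewrite -scalemxAl -mulmxA mul_col_scalar scalerA; congr (_ *: _).
by rewrite linearB /= linearZ /= mulmxBl -scalemxAl scD scN scZ !phi_inner.
Qed.

Lemma gbarB rr theta theta' :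
  gbar P pi rr gamma Phi theta - gbar P pi rr gamma Phi theta' =
  - (Bmat P pi gamma Phi *m (theta - theta')).
Proof.
rewrite Bmat_mulmx /gbar -sumrB -sumrN; apply: eq_bigr => s _.
rewrite -sumrB -sumrN; apply: eq_bigr => s' _.
rewrite -scalerBl -scaleNr !phi_inner /value !mulmxBr !mxE; congr (_ *: _).
ring.
Qed.

Lemma quad_Bmat d : quad (Bmat P pi gamma Phi) d =
  \sum_s \sum_s' pi 0 s * P s s' * (value d s - gamma * value d s') * value d s.
Proof.
rewrite /quad -mulmxA Bmat_mulmx mulmx_sumr /sc summxE; apply: eq_bigr => s _.
rewrite mulmx_sumr summxE; apply: eq_bigr => s' _.
rewrite -scalemxAr mxE; congr (_ * _).
by rewrite -/(sc _) -sc_trmx trmx_mul [d^T^T]trmxK phi_inner.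
Qed.

Hypothesis P_stochastic : stochastic P.
Hypothesis pi_stationary : stationary_dist P pi.

(* Under the joint law of (s, s'), a function of the current state s has
   expectation E_pi[F] because the rows of P sum to one ... *)
Lemma expect_current (F : 'I_n -> R) :
  \sum_s \sum_s' pi 0 s * P s s' * F s = \sum_s pi 0 s * F s.
Proof.
apply: eq_bigr => s _.
by rewrite -big_distrl /= -big_distrr /= (proj2 P_stochastic) mulr1.
Qed.

(* ... and so does a function of the next state s', because pi P = pi. *)
Lemma expect_next (F : 'I_n -> R) :
  \sum_s \sum_s' pi 0 s * P s s' * F s' = \sum_s pi 0 s * F s.
Proof.
rewrite exchange_big /=; apply: eq_bigr => s' _.
rewrite -big_distrl /=; congr (_ * _).
by case: pi_stationary => _ [_ piP]; rewrite -{2}piP mxE.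
Qed.

(* The key identity: for any value function x,
   (1 - gamma) ||x||_D^2 + gamma ||x||_Dir^2 = E[(x(s) - gamma x(s')) x(s)].
   Both sides reduce to ||x||_D^2 - gamma E[x(s) x(s')] by stationarity. *)
Lemma td_energy_identity (x : 'I_n -> R) :
  (1 - gamma) * (\sum_s pi 0 s * x s ^+ 2)
  + gamma * (2^-1 * \sum_s \sum_s' pi 0 s * P s s' * (x s' - x s) ^+ 2)
  = \sum_s \sum_s' pi 0 s * P s s' * (x s - gamma * x s') * x s.
Proof.
set cross := \sum_s \sum_s' pi 0 s * P s s' * (x s * x s').
have dirichlet : \sum_s \sum_s' pi 0 s * P s s' * (x s' - x s) ^+ 2 =
    \sum_s \sum_s' pi 0 s * P s s' * x s' ^+ 2
    + \sum_s \sum_s' pi 0 s * P s s' * x s ^+ 2 - 2%:R * cross.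
  rewrite -big_split /= mulr_sumr -sumrB; apply: eq_bigr => s _.
  rewrite -big_split /= mulr_sumr -sumrB; apply: eq_bigr => s' _.
  ring.
have bellman : \sum_s \sum_s' pi 0 s * P s s' * (x s - gamma * x s') * x s =
    \sum_s \sum_s' pi 0 s * P s s' * x s ^+ 2 - gamma * cross.
  rewrite mulr_sumr -sumrB; apply: eq_bigr => s _.
  rewrite mulr_sumr -sumrB; apply: eq_bigr => s' _.
  ring.
rewrite dirichlet bellman (expect_current (fun s => x s ^+ 2))
  (expect_next (fun s => x s ^+ 2)).
by field.
Qed.

Lemma fobj_quad_Bmat thetastar theta :
  fobj P pi gamma Phi thetastar theta
  = quad (Bmat P pi gamma Phi) (theta - thetastar).
Proof.
rewrite /fobj /normD2 /dir2 -mulmxBr quad_Bmat.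
exact: (td_energy_identity (value (theta - thetastar))).
Qed.

End TDQuadratic.

Lemma fobj_ge0 (R : realFieldType) (n K : nat) (P : 'M[R]_n) (pi : 'rV[R]_n)
    (gamma : R) (Phi : 'M[R]_(n, K)) (thetastar theta : 'cV[R]_K) :
  stochastic P -> stationary_dist P pi -> 0 <= gamma <= 1 ->
  0 <= fobj P pi gamma Phi thetastar theta.
Proof.
move=> [P_ge0 _] [pi_ge0 _] /andP[gamma_ge0 gamma_le1].
rewrite /fobj /normD2 /dir2.
apply: addr_ge0; apply: mulr_ge0 => //.
- by rewrite subr_ge0.
- by apply: sumr_ge0 => s _; rewrite mulr_ge0 ?sqr_ge0.
- rewrite mulr_ge0 ?invr_ge0 ?ler0n //.
  apply: sumr_ge0 => s _; apply: sumr_ge0 => s' _.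
  by rewrite mulr_ge0 ?sqr_ge0 ?mulr_ge0.
Qed.

Theorem theorem1 (R : realFieldType) (n K m : nat)
  (P : 'M[R]_n) (pi : 'rV[R]_n)
  (mu : 'I_n -> 'I_m -> R) (r : 'I_n -> 'I_m -> 'I_n -> R)
  (gamma : R) (Phi : 'M[R]_(n, K)) (thetastar : 'cV[R]_K) :
  stochastic P -> irreducible P -> aperiodic P -> stationary_dist P pi ->
  (forall s, (forall a, 0 <= mu s a) /\ \sum_a mu s a = 1) ->
  0 < gamma < 1 ->
  \rank Phi = K ->
  (forall s, \sum_k (Phi s k) ^+ 2 <= 1) ->
  gbar P pi (rbar mu r) gamma Phi thetastar = 0 ->
  gradient_splitting (fobj P pi gamma Phi thetastar)
                     (fun theta => - gbar P pi (rbar mu r) gamma Phi theta)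
  /\ (forall theta, - gbar P pi (rbar mu r) gamma Phi theta
                    = Bmat P pi gamma Phi *m (theta - thetastar))
  /\ (forall theta, fobj P pi gamma Phi thetastar theta
                    = quad (Bmat P pi gamma Phi) (theta - thetastar))
  /\ (forall A : 'M[R]_K, A^T = A ->
        (forall theta, fobj P pi gamma Phi thetastar theta = quad A (theta - thetastar)) ->
        Bmat P pi gamma Phi + (Bmat P pi gamma Phi)^T = 2%:R *: A).
Proof.
move=> P_stoch _ _ pi_stat _ /andP[gamma_gt0 gamma_lt1] _ _ gbar_star.
have gbar_lin theta : - gbar P pi (rbar mu r) gamma Phi theta
                      = Bmat P pi gamma Phi *m (theta - thetastar).
  by rewrite -[gbar _ _ _ _ _ theta]subr0 -gbar_star gbarB opprK.
have f_quad := @fobj_quad_Bmat _ _ _ P pi gamma Phi P_stoch pi_stat thetastar.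
have f_ge0 theta : 0 <= fobj P pi gamma Phi thetastar theta.
  by apply: fobj_ge0 => //; rewrite !ltW.
split; [exact: gradient_splitting_of | split=> //; split=> //].
move=> A A_sym f_A; apply: sym_part_unique => // u.
by rewrite -(addrK thetastar u) -f_A f_quad.
Qed.
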